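(* Let $0=p_0<p_1<\cdots<p_M<p_{M+1}=1$ and let $c$ be a risk model on a labelled sample $\{(\bm x_j,y_j)\}_{j=1}^N$. (a) If for some $k\in\{0,1,\dots,M-1\}$ we have $p_{k+1}N_k<O_k$, then the model $c_k'$ defined by $c_k'(\bm x_j)=p_{k+1}$ if $c(\bm x_j)\in[p_k,p_{k+1})$ and $c_k'(\bm x_j)=c(\bm x_j)$ otherwise, has strictly larger $\mathrm{AUNBC}$ than $c$. (b) If for some $k\in\{1,\dots,M\}$ we have $p_kN_k>O_k$, then the model $c_k''$ defined by $c_k''(\bm x_j)=p_{k-1}$ if $c(\bm x_j)\in G_k$ and $c_k''(\bm x_j)=c(\bm x_j)$ otherwise, has strictly larger $\mathrm{AUNBC}$ than $c$.
   Context: A risk model is any function $c$ assigning to each sample a value $c(\bm x_j)\in[0,1]$. For $i=0,\dots,M$, $\mathrm{TP}_i(c)=\#\{j:c(\bm x_j)\ge p_i,\ y_j=1\}$, $\mathrm{FP}_i(c)=\#\{j:c(\bm x_j)\ge p_i,\ y_j=0\}$, with $\mathrm{TP}_{M+1}=\mathrm{FP}_{M+1}=0$, and $\mathrm{AUNBC}(c)=\frac1N\sum_{i=0}^M(p_{i+1}-p_i)\big(\mathrm{TP}_i(c)-\mathrm{FP}_i(c)\frac{p_i}{1-p_i}\big)$. The risk groups are $G_i=[p_i,p_{i+1})$ for $i=0,\dots,M-1$ and $G_M=[p_M,1]$; $N_i$ is the number of samples with $c(\bm x_j)\in G_i$ and $O_i$ the number of positive samples ($y_j=1$) with $c(\bm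 x_j)\in G_i$ (equivalently $O_i=\mathrm{TP}_i-\mathrm{TP}_{i+1}$, $N_i=O_i+\mathrm{FP}_i-\mathrm{FP}_{i+1}$). *)

From mathcomp Require Import all_boot all_order all_algebra.
Set Implicit Arguments. Unset Strict Implicit. Unset Printing Implicit Defensive.
Import Order.TTheory GRing.Theory Num.Theory.
Local Open Scope ring_scope.

Section Defs.
Variables (R : realFieldType) (N M : nat) (p : nat -> R).

(* risk model on the N samples: c j = c(x_j); labels y j = (y_j == 1) *)
Definition TP (c : 'I_N -> R) (y : 'I_N -> bool) (i : nat) : R :=
  if (i <= M)%N then (#|[set j | (p i <= c j) && y j]|)%:R else 0.
Definition FP (c : 'I_N -> R) (y : 'I_N -> bool) (i : nat) : R :=
  if (i <= M)%N then (#|[set j | (p i <= c j) && ~~ y j]|)%:R else 0.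

Definition AUNBC (c : 'I_N -> R) (y : 'I_N -> bool) : R :=
  N%:R^-1 * \sum_(0 <= i < M.+1)
     (p i.+1 - p i) * (TP c y i - FP c y i * (p i / (1 - p i))).

Definition inG (i : nat) (v : R) : bool :=
  if (i < M)%N then (p i <= v) && (v < p i.+1)
  else (p M <= v) && (v <= 1).

Definition Ncount (c : 'I_N -> R) (i : nat) : R :=
  (#|[set j | inG i (c j)]|)%:R.
Definition Ocount (c : 'I_N -> R) (y : 'I_N -> bool) (i : nat) : R :=
  (#|[set j | inG i (c j) && y j]|)%:R.
End Defs.

From mathcomp Require Import all_boot all_order all_algebra ring.
Import Order.TTheory GRing.Theory Num.Theory.
Local Open Scope ring_scope.

(* Writing TP_i - FP_i p_i/(1 - p_i) as a sum over samples of the indicator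
   [p_i <= c(x_j)] weighted by 1 (positives) or -p_i/(1 - p_i) (negatives),
   moving risk group G_k onto a neighbouring threshold only toggles the
   indicators of its own samples at a single threshold index t.  The AUNBC
   therefore changes by (p_(t+1) - p_t)/N times +/- the weighted count of
   G_k, which equals (O_k - p_t N_k)/(1 - p_t): the hypotheses of (a) and (b)
   are exactly the statements that this change is positive. *)

Section NetBenefit.
Variables (R : realFieldType) (N M : nat) (p : nat -> R).

Lemma natr_leqS_sub (i k : nat) :
  ((i <= k.+1)%N%:R - (i <= k)%N%:R : R) = (i == k.+1)%:R.
Proof.
by rewrite leq_eqVlt ltnS; case: eqP => [->|_]; rewrite ?ltnn /= ?subr0 ?subrr.
Qed.

Definition nb_weight (t : nat) (b : bool) : R :=
  if b then 1 else - (p t / (1 - p t)).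

Lemma card_set_indicator (P : pred 'I_N) :
  (#|[set j | P j]|%:R : R) = \sum_j (P j)%:R.
Proof.
rewrite -sum1_card natr_sum big_mkcond /=; apply: eq_bigr => j _.
by rewrite inE; case: (P j).
Qed.

Lemma card_set_gt0 (A : {set 'I_N}) : 0 < (#|A|%:R : R) -> 0 < (N%:R : R).
Proof.
rewrite !ltr0n => /leq_trans; apply.
by rewrite -[X in (_ <= X)%N](card_ord N) max_card.
Qed.

Lemma TP_sub_FP_odds (c : 'I_N -> R) y t : (t <= M)%N ->
  TP M p c y t - FP M p c y t * (p t / (1 - p t)) =
  \sum_j ((p t <= c j)%R)%:R * nb_weight t (y j).
Proof.
move=> ht; rewrite /TP /FP ht !card_set_indicator mulr_suml -sumrB.
apply: eq_bigr => j _; rewrite /nb_weight.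
by case: (p t <= c j); case: (y j); rewrite /=; ring.
Qed.

Lemma AUNBC_sub (c c' : 'I_N -> R) y :
  AUNBC M p c' y - AUNBC M p c y =
  N%:R^-1 * \sum_(0 <= i < M.+1) (p i.+1 - p i) *
     \sum_j (((p i <= c' j)%R)%:R - ((p i <= c j)%R)%:R) * nb_weight i (y j).
Proof.
rewrite /AUNBC -mulrBr -sumrB; congr (_ * _).
rewrite big_nat [RHS]big_nat; apply: eq_bigr => i /andP[_ hi].
rewrite -mulrBr !TP_sub_FP_odds // -sumrB; congr (_ * _).
by apply: eq_bigr => j _; rewrite mulrBl.
Qed.

Lemma sum_inG_nb_weight (c : 'I_N -> R) y g t : p t != 1 ->
  \sum_j (inG M p g (c j))%:R * nb_weight t (y j) =
  (Ocount M p c y g - p t * Ncount M p c g) / (1 - p t).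
Proof.
move=> pt1; rewrite /Ocount /Ncount !card_set_indicator.
pose F : R := \sum_j (inG M p g (c j) && ~~ y j)%:R.
have -> : \sum_j (inG M p g (c j))%:R =
    \sum_j (inG M p g (c j) && y j)%:R + F :> R.
  rewrite -big_split; apply: eq_bigr => j _.
  by case: (inG M p g (c j)); case: (y j); rewrite /=; ring.
have -> : \sum_j (inG M p g (c j))%:R * nb_weight t (y j) =
    \sum_j (inG M p g (c j) && y j)%:R - F * (p t / (1 - p t)).
  rewrite mulr_suml -sumrB; apply: eq_bigr => j _; rewrite /nb_weight.
  by case: (inG M p g (c j)); case: (y j); rewrite /=; ring.
have : 1 - p t != 0 by rewrite subr_eq0 eq_sym.
by move=> ?; field.
Qed.

Lemma AUNBC_shift_group (c c' : 'I_N -> R) y (g t : nat) (s : R) :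
  (t <= M)%N -> p t != 1 ->
  (forall i j, (i <= M)%N ->
     ((p i <= c' j)%R)%:R - ((p i <= c j)%R)%:R =
       (i == t)%:R * s * (inG M p g (c j))%:R) ->
  AUNBC M p c' y - AUNBC M p c y =
  N%:R^-1 * (s * (p t.+1 - p t)) *
    ((Ocount M p c y g - p t * Ncount M p c g) / (1 - p t)).
Proof.
move=> htM pt1 hshift; rewrite AUNBC_sub -mulrA; congr (_ * _).
rewrite -sum_inG_nb_weight //.
transitivity (\sum_(0 <= i < M.+1) (i == t)%:R *
    (s * (p i.+1 - p i) * \sum_j (inG M p g (c j))%:R * nb_weight i (y j))).
  rewrite !big_nat; apply: eq_bigr => i /andP[_ hi].
  rewrite !mulr_sumr; apply: eq_bigr => j _; rewrite hshift //; ring.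
rewrite (bigD1_seq t) ?mem_index_iota ?iota_uniq //= eqxx mul1r.
by rewrite [X in _ + X]big1 ?addr0 // => i /negbTE ->; rewrite mul0r.
Qed.

Hypothesis p_incr : forall i, (i <= M)%N -> p i < p i.+1.

Lemma p_ltn a b : (a < b)%N -> (b <= M.+1)%N -> p a < p b.
Proof.
elim: b => // b IH; rewrite ltnS leq_eqVlt => /orP[/eqP->|hab] hb.
  exact: p_incr.
exact: lt_trans (IH hab (ltnW hb)) (p_incr _ hb).
Qed.

Lemma p_leq a b : (a <= M.+1)%N -> (b <= M.+1)%N -> (p a <= p b) = (a <= b)%N.
Proof.
move=> ha hb; case: (ltngtP a b) => [h|h|->]; last exact: lexx.
- by rewrite ltW // p_ltn.
- by apply/negbTE; rewrite -ltNge p_ltn.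
Qed.

Lemma inG_p_le {g i v} : (g <= M)%N -> (i <= M)%N -> inG M p g v ->
  (p i <= v) = (i <= g)%N.
Proof.
rewrite /inG => hgM hiM; case: ltnP => [hg|hMg] /andP[hv hv'].
  have [hig|hgi] := leqP i g; first by apply/idP/(le_trans _ hv); rewrite p_leq ?leqW.
  by apply/negbTE; rewrite -ltNge; apply: lt_le_trans hv' _; rewrite p_leq ?leqW.
have -> : g = M by apply/eqP; rewrite eqn_leq hgM.
by rewrite hiM; apply/idP/(le_trans _ hv); rewrite p_leq ?leqW.
Qed.

Lemma raise_group_thresholds (c : 'I_N -> R) k i j : (k < M)%N -> (i <= M)%N ->
  (p i <= (if (p k <= c j) && (c j < p k.+1) then p k.+1 else c j))%R%:R
    - ((p i <= c j)%R)%:R = (i == k.+1)%:R * 1 * (inG M p k (c j))%:R :> R.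
Proof.
move=> hk hi; have hG : inG M p k (c j) = (p k <= c j) && (c j < p k.+1).
  by rewrite /inG hk.
rewrite -hG; case hg: (inG M p k (c j)); last by rewrite subrr mulr0.
rewrite (inG_p_le (ltnW hk) hi hg) (p_leq _ _ (leqW hi) (leqW hk)) /=.
by rewrite !mulr1 natr_leqS_sub.
Qed.

Lemma lower_group_thresholds (c : 'I_N -> R) k i j : (0 < k <= M)%N -> (i <= M)%N ->
  (p i <= (if inG M p k (c j) then p k.-1 else c j))%R%:R - ((p i <= c j)%R)%:R
    = (i == k)%:R * -1 * (inG M p k (c j))%:R :> R.
Proof.
case: k => [|k] // /andP[_ hk] hi.
case hg: (inG M p k.+1 (c j)); last by rewrite subrr mulr0.
rewrite (inG_p_le hk hi hg) (p_leq _ _ (leqW hi) (leqW (ltnW hk))) /=.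
by rewrite -opprB natr_leqS_sub mulr1 mulrN1.
Qed.

End NetBenefit.

Arguments card_set_gt0 {R N A}.
Arguments p_ltn {R M p}.
Arguments p_leq {R M p}.
Arguments AUNBC_shift_group {R N M p c c' y} g t s.

Theorem theorem2 (R : realFieldType) (N M : nat) (p : nat -> R)
  (c : 'I_N -> R) (y : 'I_N -> bool) :
  p 0%N = 0 -> p M.+1 = 1 ->
  (forall i : nat, (i <= M)%N -> p i < p i.+1) ->
  (forall j, 0 <= c j <= 1) ->
  (forall k : nat, (k < M)%N ->
     p k.+1 * Ncount M p c k < Ocount M p c y k ->
     let c' := fun j => if (p k <= c j) && (c j < p k.+1) then p k.+1 else c j in
     AUNBC M p c y < AUNBC M p c' y) /\
  (forall k : nat, (1 <= k <= M)%N ->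
     p k * Ncount M p c k > Ocount M p c y k ->
     let c'' := fun j => if inG M p k (c j) then p k.-1 else c j in
     AUNBC M p c y < AUNBC M p c'' y).
Proof.
move=> p0 pM p_incr _.
have p_ge0 i : (i <= M.+1)%N -> 0 <= p i by move=> hi; rewrite -p0 (p_leq p_incr).
have p_lt1 i : (i <= M)%N -> p i < 1 by move=> hi; rewrite -pM (p_ltn p_incr).
split=> k hk hlt; rewrite /= -subr_gt0.
- have hO : 0 < Ocount M p c y k.
    by apply: le_lt_trans _ hlt; rewrite mulr_ge0 ?p_ge0 ?(leqW hk).
  rewrite (AUNBC_shift_group k k.+1 1 hk (negbT (lt_eqF (p_lt1 _ hk)))); last first.
    by move=> i j; apply: raise_group_thresholds.
  have N_gt0 : 0 < N%:R :> R := card_set_gt0 hO.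
  by rewrite mul1r !mulr_gt0 ?invr_gt0 ?subr_gt0 ?p_incr ?p_lt1.
- have hkM : (k <= M)%N by case/andP: hk.
  have hN : 0 < Ncount M p c k.
    rewrite lt_def ler0n andbT; apply: contraTneq hlt => ->.
    by rewrite mulr0 -leNgt ler0n.
  rewrite (AUNBC_shift_group k k (-1) hkM (negbT (lt_eqF (p_lt1 _ hkM)))); last first.
    by move=> i j; apply: lower_group_thresholds.
  rewrite mulN1r mulrN mulNr -mulrN -mulNr opprB.
  have N_gt0 : 0 < N%:R :> R := card_set_gt0 hN.
  by rewrite !mulr_gt0 ?invr_gt0 ?subr_gt0 ?p_incr ?p_lt1.
Qed.
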